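(* Let $A$ be an $n\times n$ real matrix with spectrum $\{\lambda_1,\dots,\lambda_n\}$ (counting algebraic multiplicities). Suppose $\lambda_1$ is real with a real eigenvector $v$ having no zero components. Let $B=[b_{ij}]=S^{-1}AS$ with $S=\mathrm{diag}(v)$. (1) If $n$ is even, let $F=[b_{ij}-\beta_j]$, where $\beta_j$ is the $(n/2)$-th largest element among $b_{1j},\dots,b_{j-1,j},b_{j+1,j},\dots,b_{nj}$. Then $\lambda_i\in\Gamma(F)\cap\Gamma(F^T)$ for $i=2,\dots,n$. (2) If $n$ is odd with $n\ge 3$, let $\beta_j$ and $\gamma_j$ be, respectively, the negatives of the $\frac{n-1}{2}$-th and the $\frac{n+1}{2}$-th largest numbers among $b_{1j},\dots,b_{j-1,j},b_{j+1,j},\dots,b_{nj}$, and let $F=[b_{ij}+\beta_j]$, $G=[b_{ij}+\gamma_j]$. Then $\lambda_i\in\Gamma(F)\cap\Gamma(F^T)\cap\Gamma(G)\cap\Gamma(G^T)$ for $i=2,\dots,n$.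
   Context: For an $n\times n$ complex matrix $M=[m_{ij}]$, its Ostrowski–Brauer set is $$\Gamma(M)=\bigcup_{1\le i<j\le n}\Big\{y\in\mathbb{C}: |y-m_{ii}|\,|y-m_{jj}|\le \Big(\sum_{k\ne i}|m_{ik}|\Big)\Big(\sum_{k\ne j}|m_{jk}|\Big)\Big\}.$$ ''The $t$-th largest element'' of a list refers to the $t$-th entry of the list sorted in non-increasing order (with repetitions). *)

From HB Require Import structures.
From mathcomp Require Import all_boot all_order all_algebra.
From mathcomp Require Import complex.
Set Implicit Arguments. Unset Strict Implicit. Unset Printing Implicit Defensive.
Import Order.TTheory GRing.Theory Num.Theory.
Local Open Scope ring_scope.

Definition deleted_row_sum (C : numClosedFieldType) (n : nat) (M : 'M[C]_n)
  (i : 'I_n) : C := \sum_(k < n | k != i) `|M i k|.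

Definition ostrowski_brauer (C : numClosedFieldType) (n : nat) (M : 'M[C]_n)
  (y : C) : Prop :=
  exists i j : 'I_n, (i < j)%N /\
    `|y - M i i| * `|y - M j j| <= deleted_row_sum M i * deleted_row_sum M j.

(* t-th largest element (1-indexed) of a list: the t-th entry of the list
   sorted non-increasingly (with repetitions). *)
Definition tth_largest (R : realDomainType) (t : nat) (s : seq R) : R :=
  nth 0 (sort (fun x y : R => y <= x) s) t.-1.

Definition offdiag_col (R : Type) (n : nat) (B : 'M[R]_n) (j : 'I_n) : seq R :=
  [seq B i j | i <- enum 'I_n & i != j].

Definition cmx (R : rcfType) (m n : nat) (M : 'M[R]_(m, n)) : 'M[R[i]]_(m, n) :=
  map_mx (fun x => x%:C%C) M.

From HB Require Import structures.
From mathcomp Require Import all_boot all_order all_algebra.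
From mathcomp Require Import complex.
Set Implicit Arguments.
Unset Strict Implicit.
Unset Printing Implicit Defensive.
Import Order.TTheory GRing.Theory Num.Theory.
Local Open Scope ring_scope.

(* With S = diag v the all-ones vector is an eigenvector of B for lam1, i.e. B
   has constant row sums lam1. Adding the rank-one matrix 1 b, b = (beta_j)_j,
   then only moves that eigenvalue: conjugating by a unimodular matrix whose
   first column is 1 makes column 0 vanish below the diagonal, which gives
     char_poly (B + 1 b) * (X - lam1) = char_poly B * (X - (lam1 + sum_j beta_j)),
   so lam_2, ..., lam_n stay eigenvalues of F (and of F^T) for every choice of
   the shifts beta_j. They then lie in the Ostrowski-Brauer set: if x is an
   eigenvector for y and |x_p| >= |x_q| are its two largest entries, rows p and
   q of (y - F) x = 0 give |y - f_pp| |x_p| <= r_p |x_q| and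
   |y - f_qq| |x_q| <= r_q |x_p|. *)

Local Notation ones n := (const_mx 1 : 'cV_n).

Section OstrowskiBrauer.
Variables (C : numClosedFieldType) (n : nat) (M : 'M[C]_n).

Lemma eigenvector_row_bound (x : 'cV[C]_n) y i (c : C) :
  M *m x = y *: x -> (forall k, k != i -> `|x k 0| <= c) ->
  `|y - M i i| * `|x i 0| <= deleted_row_sum M i * c.
Proof.
move=> Mx xc; rewrite -normrM.
have -> : (y - M i i) * x i 0 = \sum_(k | k != i) M i k * x k 0.
  have := congr1 (fun z : 'cV_n => z i 0) Mx; rewrite !mxE (bigD1 i) //= => e.
  by rewrite mulrBl -e addrAC subrr add0r.
rewrite /deleted_row_sum mulr_suml; apply: le_trans (ler_norm_sum _ _ _) _.
by apply: ler_sum => k ki; rewrite normrM ler_wpM2l // xc.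
Qed.

Lemma ostrowski_brauer_pair y i j : i != j ->
  `|y - M i i| * `|y - M j j| <= deleted_row_sum M i * deleted_row_sum M j ->
  ostrowski_brauer M y.
Proof.
case: (ltngtP i j) => [ij _ le|ji _ le|/val_inj-> /eqP//]; first by exists i, j.
by exists j, i; rewrite mulrC [X in _ <= X]mulrC.
Qed.

Lemma ostrowski_brauer_eigenvector (x : 'cV[C]_n) y :
  (1 < n)%N -> x != 0 -> M *m x = y *: x -> ostrowski_brauer M y.
Proof.
move=> n_gt1 x_neq0 Mx.
pose i0 : 'I_n := Ordinal (ltnW n_gt1); pose i1 : 'I_n := Ordinal n_gt1.
have cmp k l : `|x k 0| >=< `|x l 0| by rewrite real_comparable ?normr_real.
case: (@comparable_arg_maxP _ _ _ i0 predT (fun k => `|x k 0|) isT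
  (fun k l _ _ => cmp k l)) => p _ p_max.
have [k0 k0p] : exists k0, k0 != p.
  have [->|pi0] := eqVneq p i0; last by exists i0; rewrite eq_sym.
  by exists i1; rewrite -val_eqE.
case: (@comparable_arg_maxP _ _ _ _ (fun k => k != p) (fun k => `|x k 0|) k0p
  (fun k l _ _ => cmp k l)) => q qp q_max.
apply: (@ostrowski_brauer_pair _ p q); first by rewrite eq_sym.
have xp_gt0 : 0 < `|x p 0|.
  have [k xk] : exists k, x k 0 != 0.
    apply/existsP; apply: contraR x_neq0 => /existsPn x0.
    by apply/eqP/matrixP => k l; rewrite (ord1 l) mxE; apply/eqP/negbNE.
  by apply: lt_le_trans (p_max k isT); rewrite normr_gt0.
have bp := eigenvector_row_bound Mx q_max.
have bq := eigenvector_row_bound Mx (fun k _ => p_max k isT).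
have [xq0|xq_gt0] := eqVneq `|x q 0| 0.
  move: bp; rewrite xq0 mulr0 pmulr_lle0 // normr_le0 => /eqP->.
  by rewrite normr0 mul0r mulr_ge0 ?sumr_ge0.
have {}xq_gt0 : 0 < `|x q 0| by rewrite lt_def xq_gt0 normr_ge0.
rewrite -(ler_pM2r (mulr_gt0 xp_gt0 xq_gt0)) mulrACA.
apply: le_trans (ler_pM _ _ bp (bq q)) _; rewrite ?mulr_ge0 //.
by rewrite mulrACA [X in _ * X <= _]mulrC.
Qed.

End OstrowskiBrauer.

Lemma char_poly_trmx (R : comNzRingType) n (M : 'M[R]_n) :
  char_poly M^T = char_poly M.
Proof.
rewrite /char_poly -det_tr; congr (\det _); apply/matrixP => i j.
by rewrite !mxE eq_sym.
Qed.

Lemma ostrowski_brauer_root (C : numClosedFieldType) n (M : 'M[C]_n) y :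
  (1 < n)%N -> root (char_poly M) y -> ostrowski_brauer M y.
Proof.
move=> n_gt1; rewrite -char_poly_trmx -eigenvalue_root_char.
case/eigenvalueP => x xM x_neq0.
apply: (ostrowski_brauer_eigenvector (x := x^T)) => //; first by rewrite trmx_eq0.
by rewrite -[M]trmxK -trmx_mul xM linearZ.
Qed.

Lemma char_poly_conj (F : fieldType) n (S A : 'M[F]_n) :
  S \in unitmx -> char_poly (invmx S *m A *m S) = char_poly A.
Proof.
move=> S_unit; pose P := map_mx polyC S; pose Q := map_mx polyC (invmx S).
have QP : Q *m P = 1%:M by rewrite -map_mxM mulVmx // map_mx1.
rewrite /char_poly.
have -> : char_poly_mx (invmx S *m A *m S) = Q *m char_poly_mx A *m P.
  rewrite /char_poly_mx !map_mxM mulmxBr mulmxBl mul_mx_scalar.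
  by rewrite -scalemxAl QP scalemx1.
by rewrite !det_mulmx mulrAC -det_mulmx QP det1 mul1r.
Qed.

Section RankOnePerturbation.
Variables (R : comNzRingType) (n : nat).
Local Notation N := n.+1.

Definition addcols_mx : 'M[R]_N :=
  \matrix_(i, j) (if j == 0 then 1 else (i == j)%:R).

Definition subrow0_mx : 'M[R]_N :=
  \matrix_(i, j) ((i == j)%:R - ((j == 0) && (i != 0))%:R).

Lemma mulmx_addcols m (Y : 'M[R]_(m, N)) i j :
  (Y *m addcols_mx) i j = if j == 0 then \sum_k Y i k else Y i j.
Proof.
rewrite mxE; have [->|j_neq0] := eqVneq j 0.
  by apply: eq_bigr => k _; rewrite mxE eqxx mulr1.
rewrite (bigD1 j) //= big1 ?addr0; first by rewrite mxE (negPf j_neq0) eqxx mulr1.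
by move=> k /negPf kj; rewrite mxE (negPf j_neq0) kj mulr0.
Qed.

Lemma mul_subrow0_mx m (Y : 'M[R]_(N, m)) i j :
  (subrow0_mx *m Y) i j = Y i j - (i != 0)%:R * Y 0 j.
Proof.
rewrite mxE; have [->|i_neq0] := eqVneq i 0.
  rewrite (bigD1 0) //= big1 ?addr0 => [|k k_neq0]; rewrite mxE.
    by rewrite eqxx /= !subr0 mul1r mul0r subr0.
  by rewrite eq_sym (negPf k_neq0) andbF subrr mul0r.
rewrite (bigD1 i) //= (bigD1 0) 1?eq_sym //= big1 ?addr0 => [|k /andP[ki k0]].
  by rewrite !mxE eqxx i_neq0 (negPf i_neq0) /= !subr0 sub0r !mul1r mulN1r.
by rewrite mxE eq_sym (negPf ki) (negPf k0) subrr mul0r.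
Qed.

Lemma subrow0_addcols : subrow0_mx *m addcols_mx = 1%:M.
Proof.
apply/matrixP => i j; rewrite mul_subrow0_mx !mxE.
have [->|_] := eqVneq j 0; last by rewrite mulr0 subr0.
by case: (i == 0); rewrite /= mulr1 ?subr0 ?subrr.
Qed.

Lemma det_subrow0_addcols (Y : 'M[R]_N) :
  \det (subrow0_mx *m Y *m addcols_mx) = \det Y.
Proof. by rewrite !det_mulmx mulrAC -det_mulmx subrow0_addcols det1 mul1r. Qed.

Lemma det_const_row_sums (Y : 'M[R]_N) c : Y *m ones N = c *: ones N ->
  \det Y = c * \det (row' 0 (col' 0 (subrow0_mx *m Y *m addcols_mx))).
Proof.
move=> Yc; rewrite -det_subrow0_addcols (expand_det_col _ 0).
have col0 i : (subrow0_mx *m Y *m addcols_mx) i 0 = (i == 0)%:R * c.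
  rewrite mulmx_addcols eqxx.
  have -> : \sum_k (subrow0_mx *m Y) i k = (subrow0_mx *m Y *m ones N) i 0.
    by rewrite [RHS]mxE; apply: eq_bigr => k _; rewrite [const_mx _ _ _]mxE mulr1.
  rewrite -mulmxA Yc -scalemxAr mxE mul_subrow0_mx !mxE.
  by rewrite mulr1 mulrC; case: (i == 0); rewrite /= ?subr0 ?subrr.
rewrite (bigD1 0) //= big1 ?addr0 => [|i /negPf i_neq0]; rewrite col0.
  by rewrite eqxx mul1r /cofactor /= expr0 mul1r.
by rewrite i_neq0 !mul0r.
Qed.

Lemma det_add_ones_row (D : 'M[R]_N) (b : 'rV[R]_N) a :
  D *m ones N = a *: ones N ->
  \det (D + ones N *m b) * a = \det D * (a + (b *m ones N) 0 0).
Proof.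
move=> Da.
have D'a : (D + ones N *m b) *m ones N = (a + (b *m ones N) 0 0) *: ones N.
  by rewrite mulmxDl Da -mulmxA {1}[b *m ones N]mx11_scalar mul_mx_scalar scalerDl.
rewrite (det_const_row_sums D'a) (det_const_row_sums Da).
suff -> : row' 0 (col' 0 (subrow0_mx *m (D + ones N *m b) *m addcols_mx)) =
          row' 0 (col' 0 (subrow0_mx *m D *m addcols_mx)).
  by rewrite mulrAC [in RHS]mulrAC [a * _]mulrC.
rewrite mulmxDr mulmxDl; apply/matrixP => i j; rewrite !mxE.
rewrite [X in _ + X]big1 ?addr0 // => k _.
rewrite mulmxA [(_ *m b) _ _]mxE big_ord1 mul_subrow0_mx !mxE.
by rewrite eq_sym neq_lift mulr1 subrr !mul0r.
Qed.
End RankOnePerturbation.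

Lemma char_poly_add_ones_row (R : comNzRingType) n (B : 'M[R]_n.+1)
    (b : 'rV[R]_n.+1) a :
  B *m ones n.+1 = a *: ones n.+1 ->
  char_poly (B + ones n.+1 *m b) * ('X - a%:P) =
  char_poly B * ('X - (a + (b *m ones n.+1) 0 0)%:P).
Proof.
move=> Ba.
have onesE : map_mx (@polyC R) (ones n.+1) = ones n.+1 by rewrite map_const_mx.
have Bu : char_poly_mx B *m ones n.+1 = ('X - a%:P) *: ones n.+1.
  by rewrite mulmxBl mul_scalar_mx -onesE -map_mxM Ba map_mxZ scalerBl.
rewrite /char_poly.
have -> : char_poly_mx (B + ones n.+1 *m b) =
          char_poly_mx B + ones n.+1 *m map_mx polyC (- b).
  by rewrite /char_poly_mx map_mxD map_mxM onesE map_mxN mulmxN opprD addrA.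
rewrite det_add_ones_row //; congr (_ * _).
by rewrite -onesE -map_mxM mxE mulNmx mxE rmorphN polyCD opprD addrA.
Qed.

Lemma root_char_poly_add_ones_row (F : idomainType) n (B : 'M[F]_n)
    (b : 'rV[F]_n) a (lam : seq F) :
  B *m ones n = a *: ones n -> char_poly B = \prod_(x <- lam) ('X - x%:P) ->
  lam`_0 = a ->
  forall k, (0 < k < n)%N -> root (char_poly (B + ones n *m b)) lam`_k.
Proof.
case: n B b => [|n] B b Ba charB lam0 k /andP[k_gt0 k_lt] //.
have size_lam := size_char_poly B; rewrite charB size_prod_XsubC in size_lam.
case: lam charB lam0 size_lam => [//|x lam] charB /= lam0 [size_lam]; subst a.
have := char_poly_add_ones_row b Ba; rewrite charB big_cons -mulrA [RHS]mulrC.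
move/(mulIf (negbT (polyXsubC_eq0 x)))->; rewrite rootM root_prod_XsubC.
by case: k k_gt0 k_lt => [//|k] _ k_lt; rewrite /= mem_nth ?size_lam.
Qed.

Lemma ostrowski_brauer_add_col_shifts (R : rcfType) n (B : 'M[R]_n) a
    (beta : 'I_n -> R) (lam : seq R[i]) :
  B *m ones n = a *: ones n -> char_poly (cmx B) = \prod_(x <- lam) ('X - x%:P) ->
  lam`_0 = (a%:C)%C -> forall k, (0 < k < n)%N ->
  let F := \matrix_(i, j) (B i j + beta j) in
  ostrowski_brauer (cmx F) lam`_k /\ ostrowski_brauer (cmx F^T) lam`_k.
Proof.
move=> Ba charB lam0 k k_range F.
have n_gt1 : (1 < n)%N by case/andP: k_range => /leq_ltn_trans; apply.
have cBa : cmx B *m ones n = (a%:C)%C *: ones n.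
  have := congr1 (map_mx (real_complex R)) Ba.
  by rewrite map_mxM map_mxZ !map_const_mx rmorph1; apply.
have rootF : root (char_poly (cmx F)) lam`_k.
  have -> : cmx F = cmx B + ones n *m cmx (\row_j beta j).
    by apply/matrixP => i j; rewrite !mxE big_ord1 !mxE mul1r rmorphD.
  exact: root_char_poly_add_ones_row cBa charB lam0 k k_range.
split; apply: ostrowski_brauer_root n_gt1 _; first exact: rootF.
by rewrite /cmx -map_trmx char_poly_trmx.
Qed.

Theorem theorem7 (R : rcfType) (n : nat) (A : 'M[R]_n) (lam1 : R)
  (v : 'cV[R]_n) (lam : seq R[i]) :
  A *m v = lam1 *: v ->
  (forall k : 'I_n, v k 0 != 0) ->
  char_poly (cmx A) = \prod_(x <- lam) ('X - x%:P) ->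
  lam`_0 = (lam1%:C)%C ->
  let S := diag_mx v^T in
  let B := invmx S *m A *m S in
  (~~ odd n ->
     let F := \matrix_(i, j) (B i j - tth_largest n./2 (offdiag_col B j)) in
     forall k, (1 <= k < n)%N ->
       ostrowski_brauer (cmx F) lam`_k /\ ostrowski_brauer (cmx F^T) lam`_k)
  /\
  (odd n -> (3 <= n)%N ->
     let beta := fun j => - tth_largest n.-1./2 (offdiag_col B j) in
     let gamma := fun j => - tth_largest n.+1./2 (offdiag_col B j) in
     let F := \matrix_(i, j) (B i j + beta j) in
     let G := \matrix_(i, j) (B i j + gamma j) in
     forall k, (1 <= k < n)%N ->
       [/\ ostrowski_brauer (cmx F) lam`_k, ostrowski_brauer (cmx F^T) lam`_k,
           ostrowski_brauer (cmx G) lam`_k & ostrowski_brauer (cmx G^T) lam`_k]).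
Proof.
move=> Av v_neq0 charA lam0 S B.
have S_unit : S \in unitmx.
  by rewrite unitmxE det_diag unitfE; apply/prodf_neq0 => i _; rewrite mxE.
have S_ones : S *m ones n = v.
  by apply/matrixP => i j; rewrite mul_diag_mx !mxE mulr1 (ord1 j).
have B_ones : B *m ones n = lam1 *: ones n.
  by rewrite -!mulmxA S_ones Av -scalemxAr -S_ones mulKmx.
have charB : char_poly (cmx B) = \prod_(x <- lam) ('X - x%:P).
  by rewrite -charA /cmx -!map_char_poly char_poly_conj.
have shift := ostrowski_brauer_add_col_shifts _ B_ones charB lam0.
split=> [_ F | _ _ beta gamma F G] k k_range.
  exact: (shift (fun j => - tth_largest n./2 (offdiag_col B j))).
have [F1 F2] := shift beta k k_range; have [G1 G2] := shift gamma k k_range.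
split; [exact: F1 | exact: F2 | exact: G1 | exact: G2].
Qed.
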